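(* Let $n,m,c$ be positive integers and $r,s,R,S$ nonnegative integers. Let $\alpha\in\mathrm{Par}(R,r)$, $\beta\in\mathrm{Par}(S,s)$, $\lambda\in\mathrm{Par}(n-R,c)$ and $\mu\in\mathrm{Par}(m-S,c)$. Define the annular $q$-Kreweras number \[ \mathrm{Kre}_q = q^{E}\, \frac{[nm]_q}{[n]_q[m]_q} \frac{[2c]_q}{2} \frac{[n-R]_q[m-S]_q}{[c]_q^2} \begin{bmatrix}n\\ r\end{bmatrix}_q\begin{bmatrix}m\\ s\end{bmatrix}_q \begin{bmatrix}r\\ \alpha\end{bmatrix}_q \begin{bmatrix}s\\ \beta\end{bmatrix}_q \begin{bmatrix}c\\ \lambda\end{bmatrix}_q \begin{bmatrix}c\\ \mu\end{bmatrix}_q, \] where \[ E=c(c-1)+r(c+r)+s(c+s)+r(n-c-R)+s(m-c-S)+r(R-r)+s(S-s)+c(n-R-c)+c(m-S-c)-\tau(\alpha)-\tau(\beta)-\tau(\lambda)-\tau(\mu). \] Then $\mathrm{Kre}_q$ is a polynomial in $q$.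
   Context: $\mathrm{Par}(N,k)$ is the set of integer partitions of $N$ with $k$ parts. Write $\lambda=(1^{m_1},2^{m_2},\dots)$ if $\lambda$ has $m_i$ parts equal to $i$. For a partition $\lambda$ with conjugate $\lambda'$, $\tau(\lambda)=\sum_{i\ge1}\lambda'_i\lambda'_{i+1}$. The $q$-notation is $[N]_q=(1-q^N)/(1-q)$, $[N]_q!=[1]_q\cdots[N]_q$, $\begin{bmatrix}N\\k\end{bmatrix}_q=\frac{[N]_q!}{[k]_q![N-k]_q!}$, and, for $\lambda$ with $k$ parts, $\begin{bmatrix}k\\ \lambda\end{bmatrix}_q=\frac{[k]_q!}{[m_1]_q![m_2]_q!\cdots}$. ''Polynomial'' here means polynomial with (possibly non-integer) rational coefficients. *)

From HB Require Import structures.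
From mathcomp Require Import all_boot all_order all_algebra fraction.
Set Implicit Arguments. Unset Strict Implicit. Unset Printing Implicit Defensive.
Import Order.TTheory GRing.Theory Num.Theory.

Definition is_part (l : seq nat) : bool :=
  sorted geq l && all (fun x => 0 < x) l.

Definition inPar (N k : nat) (l : seq nat) : bool :=
  [&& is_part l, sumn l == N & size l == k].

Definition mult (l : seq nat) (i : nat) : nat := count_mem i l.

(* conjugate partition: l'_i = #{ j : l_j >= i } (for i >= 1) *)
Definition conjp (l : seq nat) (i : nat) : nat := count (fun x => i <= x) l.

(* tau(l) = sum_{i >= 1} l'_i l'_{i+1}; the terms vanish for i > sumn l *)
Definition tau (l : seq nat) : nat :=
  \sum_(1 <= i < (sumn l).+1) conjp l i * conjp l i.+1.

Local Open Scope ring_scope.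
Notation "x %:F" := (@FracField.tofrac _ x) : ring_scope.

Definition RF := {fraction {poly rat}}.
Definition qv : RF := ('X : {poly rat})%:F.

Definition qint (N : nat) : RF := (1 - qv ^+ N) / (1 - qv).
Definition qfact (N : nat) : RF := \prod_(1 <= i < N.+1) qint i.
Definition qbinom (N k : nat) : RF := qfact N / (qfact k * qfact (N - k)).
(* q-multinomial [k ; l] = [k]! / prod_i [m_i]! ; m_i = 0 for i > sumn l *)
Definition qmultinom (k : nat) (l : seq nat) : RF :=
  qfact k / \prod_(1 <= i < (sumn l).+1) qfact (mult l i).

Definition Eexp (n m c r s R S : nat) (al be la mu : seq nat) : int :=
  (c%:Z * (c%:Z - 1) + r%:Z * (c%:Z + r%:Z) + s%:Z * (c%:Z + s%:Z)
   + r%:Z * (n%:Z - c%:Z - R%:Z) + s%:Z * (m%:Z - c%:Z - S%:Z)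
   + r%:Z * (R%:Z - r%:Z) + s%:Z * (S%:Z - s%:Z)
   + c%:Z * (n%:Z - R%:Z - c%:Z) + c%:Z * (m%:Z - S%:Z - c%:Z)
   - (tau al)%:Z - (tau be)%:Z - (tau la)%:Z - (tau mu)%:Z)%R.

Definition Kreq (n m c r s R S : nat) (al be la mu : seq nat) : RF :=
  qv ^ (Eexp n m c r s R S al be la mu)
  * (qint (n * m) / (qint n * qint m))
  * (qint (2 * c) / 2%:R)
  * (qint (n - R) * qint (m - S) / (qint c ^+ 2))
  * qbinom n r * qbinom m s
  * qmultinom r al * qmultinom s be * qmultinom c la * qmultinom c mu.

From HB Require Import structures.
From mathcomp Require Import all_boot all_order all_algebra fraction.
From mathcomp Require Import cyclotomic.
From mathcomp Require Import zify ring.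
Import Order.TTheory GRing.Theory Num.Theory.

(** Every factor of [Kre_q] is a product of powers of cyclotomic polynomials
   [Phi_d], d > 1: [N]_q is the product of the [Phi_d] with d | N, d > 1, and
   [N]_q! is the product of the [Phi_d ^ (N %/ d)].  Hence
   [Kre_q = q^E / 2 * prod_d Phi_d ^ v_d] with integer exponents, and it
   suffices to show [E >= 0] and [v_d >= 0].  The first follows from
   [tau l <= l'_1 * (l'_2 + l'_3 + ...) = size l * (sumn l - size l)].  For
   the second, [n %/ d >= r %/ d + (n - r) %/ d] with strict inequality when
   d | n and d does not divide r, and [k %/ d >= sum_i m_i %/ d] for a
   partition with k parts, where equality together with d | k forces d to
   divide the partitioned number; these gains pay for the factors
   [Phi_d] of [n]_q, [m]_q and [c]_q^2 in the denominator. *)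

Lemma mem_leq_sumn (l : seq nat) x : x \in l -> x <= sumn l.
Proof.
elim: l => [|y l IHl] //=; rewrite in_cons => /orP[/eqP -> | /IHl].
  exact: leq_addr.
by move/leq_trans; apply; apply: leq_addl.
Qed.

Lemma size_leq_sumn (l : seq nat) : all (fun x => 0 < x) l -> size l <= sumn l.
Proof. by elim: l => [|y l IHl] //= /andP[y_gt0 /IHl]; lia. Qed.

Lemma inParP {N k l} : inPar N k l -> [/\ is_part l, sumn l = N, size l = k & k <= N].
Proof.
case/and3P=> l_part /eqP <- /eqP <-; split=> //.
by apply: size_leq_sumn; case/andP: l_part.
Qed.

Lemma sum_mult_weight N (F : nat -> nat) (l : seq nat) :
  all (fun x => 0 < x <= N) l ->
  \sum_(1 <= i < N.+1) mult l i * F i = \sum_(x <- l) F x.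
Proof.
elim: l => [|x l IHl] /=; first by rewrite big_nil big1.
case/andP=> x_range /IHl IH; rewrite big_cons -IH.
under eq_bigr do rewrite /mult /= mulnDl.
rewrite big_split /= (bigD1_seq x) ?iota_uniq ?mem_index_iota //= eqxx mul1n.
by rewrite big1 ?addn0 // => i /negbTE; rewrite eq_sym => ->.
Qed.

Lemma part_range l : is_part l -> all (fun x => 0 < x <= sumn l) l.
Proof.
case/andP=> _ l_pos; apply/allP=> x x_l.
by rewrite (allP l_pos) ?mem_leq_sumn.
Qed.

Lemma sum_mult l : is_part l -> \sum_(1 <= i < (sumn l).+1) mult l i = size l.
Proof.
move/part_range/(@sum_mult_weight _ (fun=> 1%N)); under eq_bigr do rewrite muln1.
by move=> ->; rewrite sum1_size.
Qed.

Lemma sum_mult_weight_id {l} :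
  is_part l -> \sum_(1 <= i < (sumn l).+1) mult l i * i = sumn l.
Proof. by move/part_range/(@sum_mult_weight _ id) => ->; rewrite sumnE. Qed.

Lemma conjp1 l : all (fun x => 0 < x) l -> conjp l 1 = size l.
Proof.
by move=> l_pos; rewrite -(count_predT l); apply: eq_in_count => x /(allP l_pos).
Qed.

Lemma sum_leq_indicator {N x} : x <= N -> \sum_(1 <= i < N.+1) (i <= x) = x.
Proof.
move=> x_le; rewrite (big_cat_nat _ (n := x.+1)) //=.
rewrite big_nat_cond (eq_bigr (fun=> 1)) -?big_nat_cond; last first.
  by move=> i /andP[/andP[_]]; rewrite ltnS => ->.
rewrite [X in _ + X]big_nat_cond [X in _ + X]big1 ?addn0; last first.
  by move=> i /andP[/andP[]]; rewrite ltnNge => /negbTE ->.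
by rewrite sum_nat_const_nat muln1 subn1.
Qed.

Lemma sum_conjp {N l} : all (fun x => x <= N) l ->
  \sum_(1 <= i < N.+1) conjp l i = sumn l.
Proof.
elim: l => [|x l IHl] /=; first by rewrite big1.
case/andP=> x_le /IHl IH; rewrite -IH -[in RHS](sum_leq_indicator x_le) -big_split.
exact: eq_bigr.
Qed.

Lemma tau_leq l : is_part l -> tau l <= size l * (sumn l - size l).
Proof.
case/andP=> _ l_pos; set S := sumn l.
have l_le : all (fun x => x <= S.+1) l.
  by apply/allP=> x /mem_leq_sumn; apply: leqW.
have sum_shift : \sum_(1 <= i < S.+1) conjp l i.+1 = S - size l.
  have := sum_conjp l_le; rewrite big_ltn // big_add1 conjp1 //= -/S; lia.
rewrite /tau -/S -sum_shift big_distrr /= leq_sum // => i _.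
by rewrite leq_mul2r count_size orbT.
Qed.

Lemma tau_leq_inPar {N k l} : inPar N k l -> tau l <= k * (N - k).
Proof. by case/inParP=> l_part <- <- _; apply: tau_leq. Qed.

(* the multiplicity of [Phi_d] in [prod_i [m_i(l)]_q!] *)
Definition mult_div_sum (d : nat) (l : seq nat) : nat :=
  \sum_(1 <= i < (sumn l).+1) mult l i %/ d.

Section DivisorCounts.

Context {d : nat} (d_gt0 : 0 < d).

Lemma size_mult_div_sum {l} : is_part l ->
  size l = mult_div_sum d l * d + \sum_(1 <= i < (sumn l).+1) mult l i %% d.
Proof.
move/sum_mult <-; rewrite /mult_div_sum big_distrl -big_split /=.
by apply: eq_bigr => i _; apply: divn_eq.
Qed.

Lemma mult_div_sum_leq {l} : is_part l -> mult_div_sum d l <= size l %/ d.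
Proof. by move/size_mult_div_sum ->; rewrite divnMDl // leq_addr. Qed.

Lemma dvdn_sumn_mult_div_sum {l} : is_part l -> d %| size l ->
  mult_div_sum d l = size l %/ d -> d %| sumn l.
Proof.
move=> l_part; have size_l := size_mult_div_sum l_part.
set rest := \sum_(_ <= i < _) _ in size_l => d_size eq_div.
have rest0 : rest = 0.
  have rest_lt : rest < d.
    have : rest %/ d = 0 by move: eq_div; rewrite size_l divnMDl //; lia.
    by rewrite ltnNge -(divn_gt0 _ d_gt0) => ->.
  have /dvdnP[k rest_k] : d %| rest.
    by rewrite -(@dvdn_addr (mult_div_sum d l * d) _ rest) ?dvdn_mull // -size_l.
  by move: rest_lt; rewrite rest_k; nia.
rewrite -(sum_mult_weight_id l_part) big_seq dvdn_sum // => i i_range.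
apply: dvdn_mulr; move/eqP: rest0; rewrite /rest sum_nat_seq_eq0.
by move/allP/(_ i i_range).
Qed.

Lemma dvdn_size_mult_div_sum {N k l} : inPar N k l ->
  (d %| k) + mult_div_sum d l <= (d %| N) + k %/ d.
Proof.
case/inParP=> l_part <- <- _; have le_div := mult_div_sum_leq l_part.
have [d_size|_] := boolP (d %| size l); last by rewrite add0n (leq_trans le_div) ?leq_addl.
have [lt_div|eq_div] : mult_div_sum d l < size l %/ d \/
  mult_div_sum d l = size l %/ d by lia.
  by rewrite add1n (leq_trans lt_div) ?leq_addl.
by rewrite (dvdn_sumn_mult_div_sum l_part d_size eq_div) eq_div.
Qed.

Lemma leq_divn_sub {n r} : r <= n -> r %/ d + (n - r) %/ d <= n %/ d.
Proof. by move=> r_le; rewrite -[in leqRHS](subnKC r_le) divnD // leq_addr. Qed.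

Lemma ltn_divn_sub {n r} : r <= n -> d %| n -> ~~ (d %| r) ->
  r %/ d + (n - r) %/ d < n %/ d.
Proof.
move=> r_le d_n d_r; rewrite divnBl // d_r subn1.
have r_lt : r %/ d < n %/ d.
  rewrite ltn_divLR // divnK // ltn_neqAle r_le andbT.
  by apply: contraNneq d_r => ->.
lia.
Qed.

Lemma qbinom_qmultinom_exponent_leq {n R r al} : inPar R r al -> R <= n ->
  (d %| n) + (r %/ d + (n - r) %/ d) + mult_div_sum d al
  <= n %/ d + r %/ d + (d %| n - R).
Proof.
move=> al_par R_le; have [al_part _ al_size r_le] := inParP al_par.
have le_div := mult_div_sum_leq al_part; rewrite al_size in le_div.
have carry := leq_divn_sub (leq_trans r_le R_le).
have [d_n|_] := boolP (d %| n); last by lia.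
(* If d | n, either [qbinom n r] gains a factor [Phi_d], or d | r and then
   either [qmultinom r al] gains one or d | R, so that d | n - R. *)
have [d_r|d_r] := boolP (d %| r).
  have := dvdn_size_mult_div_sum al_par; rewrite d_r.
  have [d_R|_] := boolP (d %| R); last by lia.
  by rewrite (dvdn_sub d_n d_R); lia.
by have := ltn_divn_sub (leq_trans r_le R_le) d_n d_r; lia.
Qed.

Lemma qmultinom_pair_exponent_leq {c N M la mu} : inPar N c la -> inPar M c mu ->
  2 * (d %| c) + mult_div_sum d la + mult_div_sum d mu
  <= (d %| 2 * c) + (d %| M) + c %/ d + c %/ d.
Proof.
case/inParP=> la_part _ la_size _ mu_par.
have := mult_div_sum_leq la_part; rewrite la_size.
have := dvdn_size_mult_div_sum mu_par.
have [d_c|_] := boolP (d %| c); last by lia.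
by rewrite (dvdn_mull 2 d_c); lia.
Qed.

End DivisorCounts.

Local Open Scope ring_scope.

Definition Phi_rat (d : nat) : {poly rat} := map_poly intr 'Phi_d.

(* [Phi_1 = q - 1] never occurs in a quotient of q-integers; B only has to
   exceed every integer whose q-integer or q-factorial is being factored. *)
Definition cycprod (B : nat) (e : nat -> int) : RF :=
  \prod_(2 <= d < B) (Phi_rat d)%:F ^ e d.

Lemma Phi_rat_neq0 d : (Phi_rat d)%:F != 0.
Proof. by rewrite tofrac_eq0 monic_neq0 ?monic_map ?Cyclotomic_monic. Qed.

Lemma cycprodM B e e' : cycprod B e * cycprod B e' = cycprod B (fun d => e d + e' d).
Proof.
by rewrite /cycprod -big_split; apply: eq_bigr => d _; rewrite expfzDr ?Phi_rat_neq0.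
Qed.

Lemma cycprodV B e : (cycprod B e)^-1 = cycprod B (fun d => - e d).
Proof. by rewrite /cycprod -prodfV; apply: eq_bigr => d _; rewrite invr_expz. Qed.

Lemma eq_cycprod B e e' : (forall d, (2 <= d < B)%N -> e d = e' d) ->
  cycprod B e = cycprod B e'.
Proof. by move=> eq_e; apply: eq_big_nat => d /eq_e ->. Qed.

Lemma big_cycprod B (I : Type) (s : seq I) (e : I -> nat -> int) :
  \prod_(i <- s) cycprod B (e i) = cycprod B (fun d => \sum_(i <- s) e i d).
Proof.
elim: s => [|i s IHs].
  by rewrite big_nil /cycprod big1 // => d _; rewrite big_nil expr0z.
by rewrite big_cons IHs cycprodM; apply: eq_cycprod => d _; rewrite big_cons.
Qed.

Lemma cycprod_poly {B e} : (forall d, (1 < d)%N -> 0 <= e d) ->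
  exists p : {poly rat}, cycprod B e = p%:F.
Proof.
move=> e_ge0; exists (\prod_(2 <= d < B) Phi_rat d ^+ `|e d|%N).
rewrite rmorph_prod; apply: eq_big_nat => d /andP[/e_ge0 + _].
by case: (e d) => // k _; rewrite rmorphXn.
Qed.

Lemma prod_Phi_rat N : (0 < N)%N ->
  \prod_(d <- divisors N) Phi_rat d = 'X^N - 1.
Proof.
move=> N_gt0; rewrite -rmorph_prod prod_Cyclotomic //.
by rewrite rmorphB /= map_polyXn rmorph1.
Qed.

Lemma Phi_rat1 : Phi_rat 1 = 'X - 1.
Proof.
by have := @prod_Phi_rat 1 isT; rewrite expr1 => <-; rewrite [divisors 1]/= big_seq1.
Qed.

Lemma qint_cycprod B N : (0 < N < B)%N ->
  qint N = cycprod B (fun d => (d %| N)%N%:Z).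
Proof.
case/andP=> N_gt0 N_lt.
have divisorsE : perm_eq (divisors N) [seq d <- index_iota 1 B | d %| N]%N.
  apply: uniq_perm; rewrite ?divisors_uniq ?filter_uniq ?iota_uniq // => d.
  rewrite mem_filter -dvdn_divisors // mem_index_iota andbC.
  have [d_N|_] := boolP (d %| N)%N; last by rewrite andbF.
  by rewrite (dvdn_gt0 N_gt0 d_N) (leq_ltn_trans (dvdn_leq N_gt0 d_N)).
have -> : qint N = ('X^N - 1 : {poly rat})%:F / (Phi_rat 1)%:F.
  rewrite /qint Phi_rat1 !rmorphB /= rmorph1 rmorphXn /= -/qv.
  by rewrite -mulrNN -invrN !opprB.
rewrite -prod_Phi_rat // (perm_big _ divisorsE) big_filter rmorph_prod /=.
rewrite big_ltn_cond ?(leq_ltn_trans N_gt0) //= dvd1n mulrC mulKf ?Phi_rat_neq0 //.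
rewrite /cycprod big_mkcond /=; apply: eq_bigr => d _.
by case: (d %| N)%N; rewrite ?expr1z ?expr0z.
Qed.

Lemma qfact_cycprod B {N} : (N < B)%N -> qfact N = cycprod B (fun d => (N %/ d)%N%:Z).
Proof.
elim: N => [|N IHN] N_lt.
  by rewrite /qfact big_geq // /cycprod big1 => [//|d _]; rewrite div0n expr0z.
rewrite /qfact big_nat_recr //= -/(qfact N) IHN ?(ltnW N_lt) // (qint_cycprod B) ?N_lt //.
rewrite cycprodM; apply: eq_cycprod => d /andP[d_gt1 _].
by rewrite divnS ?(ltnW d_gt1) // PoszD addrC.
Qed.

Lemma qbinom_cycprod B N k : (k <= N < B)%N ->
  qbinom N k = cycprod B (fun d => (N %/ d)%N%:Z - (k %/ d + (N - k) %/ d)%N%:Z).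
Proof.
case/andP=> k_le N_lt; rewrite /qbinom !(qfact_cycprod B) //.
- by rewrite cycprodM cycprodV cycprodM.
- exact: leq_ltn_trans (leq_subr k N) N_lt.
- exact: leq_ltn_trans k_le N_lt.
Qed.

Lemma qmultinom_cycprod B k l : (size l <= k < B)%N ->
  qmultinom k l = cycprod B (fun d => (k %/ d)%N%:Z - (mult_div_sum d l)%:Z).
Proof.
case/andP=> size_le k_lt; rewrite /qmultinom (qfact_cycprod B k_lt).
have mult_lt i : (mult l i < B)%N.
  exact: leq_ltn_trans (count_size _ l) (leq_ltn_trans size_le k_lt).
under eq_big_nat => i _ do rewrite (qfact_cycprod B (mult_lt i)).
rewrite big_cycprod cycprodV cycprodM; apply: eq_cycprod => d _.
by rewrite /mult_div_sum (big_morph Posz PoszD (erefl _)).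
Qed.

Section AnnularKreweras.

Context {n m c r s R S : nat} {al be la mu : seq nat}.
Hypotheses (n_gt0 : (0 < n)%N) (m_gt0 : (0 < m)%N) (c_gt0 : (0 < c)%N).
Hypotheses (al_par : inPar R r al) (be_par : inPar S s be).
Hypotheses (la_par : inPar (n - R) c la) (mu_par : inPar (m - S) c mu).

(* the multiplicities of [Phi_d] in the numerator and the denominator of
   [Kre_q], after [q^E / 2] has been set aside *)
Definition kre_num_exponent (d : nat) : nat :=
  ((d %| n * m) + (d %| 2 * c) + (d %| n - R) + (d %| m - S)
   + n %/ d + m %/ d + r %/ d + s %/ d + c %/ d + c %/ d)%N.

Definition kre_den_exponent (d : nat) : nat :=
  ((d %| n) + (d %| m) + 2 * (d %| c)
   + (r %/ d + (n - r) %/ d) + (s %/ d + (m - s) %/ d)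
   + mult_div_sum d al + mult_div_sum d be
   + mult_div_sum d la + mult_div_sum d mu)%N.

Let R_le_n : (R <= n)%N.
Proof. by have [_ _ _] := inParP la_par; lia. Qed.

Let S_le_m : (S <= m)%N.
Proof. by have [_ _ _] := inParP mu_par; lia. Qed.

Lemma kre_exponent_ge0 d : (1 < d)%N ->
  0 <= (kre_num_exponent d)%:Z - (kre_den_exponent d)%:Z.
Proof.
move=> /ltnW d_gt0; rewrite subr_ge0 lez_nat.
have [be_part _ be_size s_le] := inParP be_par.
have n_side := qbinom_qmultinom_exponent_leq d_gt0 al_par R_le_n.
have m_side : (s %/ d + (m - s) %/ d + mult_div_sum d be <= m %/ d + s %/ d)%N.
  rewrite leq_add ?(leq_divn_sub d_gt0 (leq_trans s_le S_le_m)) //.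
  by rewrite -be_size (mult_div_sum_leq d_gt0 be_part).
have c_part := qmultinom_pair_exponent_leq d_gt0 la_par mu_par.
have dvdn_nm : ((d %| m) <= (d %| n * m))%N.
  by have [d_m|//] := boolP (d %| m)%N; rewrite (dvdn_mull n d_m).
have sum_parts := leq_add (leq_add (leq_add n_side m_side) c_part) dvdn_nm.
apply: leq_trans (leq_trans sum_parts _).
  by apply: eq_leq; rewrite /kre_den_exponent; ring.
by apply: eq_leq; rewrite /kre_num_exponent; ring.
Qed.

Lemma Eexp_ge0 : 0 <= Eexp n m c r s R S al be la mu.
Proof.
have [_ _ _ r_le] := inParP al_par; have [_ _ _ s_le] := inParP be_par.
have [_ _ _ c_le_nR] := inParP la_par; have [_ _ _ c_le_mS] := inParP mu_par.
have ge0_al : 0 <= r%:Z * n%:Z - (tau al)%:Z.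
  rewrite subr_ge0 -PoszM lez_nat (leq_trans (tau_leq_inPar al_par)) //.
  by rewrite leq_mul // (leq_trans (leq_subr _ _)).
have ge0_be : 0 <= s%:Z * m%:Z - (tau be)%:Z.
  rewrite subr_ge0 -PoszM lez_nat (leq_trans (tau_leq_inPar be_par)) //.
  by rewrite leq_mul // (leq_trans (leq_subr _ _)).
have ge0_la : 0 <= c%:Z * (n%:Z - R%:Z - c%:Z) - (tau la)%:Z.
  by rewrite subr_ge0 subzn // subzn // -PoszM lez_nat (tau_leq_inPar la_par).
have ge0_mu : 0 <= c%:Z * (m%:Z - S%:Z - c%:Z) - (tau mu)%:Z.
  by rewrite subr_ge0 subzn // subzn // -PoszM lez_nat (tau_leq_inPar mu_par).
have ge0_c : 0 <= c%:Z * (c%:Z - 1) by rewrite mulr_ge0 // subr_ge0 lez_nat.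
(* the terms of E involving r (resp. s) add up to r n (resp. s m) *)
have -> : Eexp n m c r s R S al be la mu =
    (r%:Z * n%:Z - (tau al)%:Z) + (s%:Z * m%:Z - (tau be)%:Z)
    + (c%:Z * (n%:Z - R%:Z - c%:Z) - (tau la)%:Z)
    + (c%:Z * (m%:Z - S%:Z - c%:Z) - (tau mu)%:Z) + c%:Z * (c%:Z - 1).
  by rewrite /Eexp; ring.
by do 4 (apply: addr_ge0 => //).
Qed.

Lemma Kreq_cycprod B : (n * m + 2 * c + n + m < B)%N ->
  Kreq n m c r s R S al be la mu = qv ^ Eexp n m c r s R S al be la mu
    * 2%:R^-1 * cycprod B (fun d => (kre_num_exponent d)%:Z - (kre_den_exponent d)%:Z).
Proof.
move=> B_gt.
have [_ _ al_size r_le] := inParP al_par.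
have [_ _ be_size s_le] := inParP be_par.
have [_ _ la_size c_le_nR] := inParP la_par.
have [_ _ mu_size c_le_mS] := inParP mu_par.
rewrite /Kreq !(qint_cycprod B) ?(qbinom_cycprod B n) ?(qbinom_cycprod B m)
  ?(qmultinom_cycprod B r) ?(qmultinom_cycprod B s) ?(qmultinom_cycprod B c); try nia.
set h := (2%:R^-1 : RF); rewrite expr2 !invfM !cycprodV -!mulrA !(mulrCA _ h).
congr (h * (_ * _)); rewrite !cycprodM; apply: eq_cycprod => d _.
by rewrite /kre_num_exponent /kre_den_exponent !PoszD; ring.
Qed.

End AnnularKreweras.

Theorem proposition3p2 (n m c r s R S : nat) (al be la mu : seq nat) :
  (0 < n)%N -> (0 < m)%N -> (0 < c)%N ->
  inPar R r al -> inPar S s be ->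
  inPar (n - R) c la -> inPar (m - S) c mu ->
  exists p : {poly rat}, Kreq n m c r s R S al be la mu = p%:F.
Proof.
move=> n_gt0 m_gt0 c_gt0 al_par be_par la_par mu_par.
pose B := (n * m + 2 * c + n + m).+1.
rewrite (Kreq_cycprod n_gt0 m_gt0 c_gt0 al_par be_par la_par mu_par B (ltnSn _)).
have [p ->] := cycprod_poly (B := B) (kre_exponent_ge0 n_gt0 m_gt0 c_gt0 al_par be_par la_par mu_par).
have [e ->] : exists e : nat, Eexp n m c r s R S al be la mu = e%:Z.
  have := Eexp_ge0 n_gt0 m_gt0 c_gt0 al_par be_par la_par mu_par.
  by case: (Eexp _ _ _ _ _ _ _ _ _ _ _) => // e _; exists e.
exists ('X^e * (2%:R : {poly rat})^-1 * p).
rewrite !rmorphM rmorphXn rmorphV /= ?rmorph_nat //.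
by rewrite -polyC_natr poly_unitE size_polyC coefC /= unitfE pnatr_eq0.
Qed.
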